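(* Let $r\geqslant 2$, $n\geqslant 2r-1$, and let $\pi,\sigma\in\mathrm{Sym}_n$ with $w_H(\pi)=2r-1$ and $w_H(\sigma)=r$. Then $\sigma\in N_3(\pi)$ if and only if the following holds. There is exactly one non-trivial cycle of $\sigma$ which is not a cycle of $\pi$, all other non-trivial cycles of $\sigma$ being cycles of $\pi$. This exceptional cycle can be written as $(y_1\,\ldots\,y_t)$ with $t\geqslant 2$ in such a way that $\pi$ has a cycle $(y_1\,\ldots\,y_t\,y_{t+1}\,\ldots\,y_{t+s})$ for some $s\geqslant 1$.
   Context: $\mathrm{Sym}_n$ is the symmetric group on $[n]$, and $w_H(\pi)=|\{i:\pi(i)\neq i\}|$. $Tc(\pi)=\{(i,\pi(i)):\pi(i)\neq i\}$. For $\pi$ with $w_H(\pi)=2r-1$, $N_3(\pi)=\{\sigma\in\mathrm{Sym}_n:|Tc(\sigma)\cap Tc(\pi)|=r-1,\ |Tc(\sigma)|=r\}$. *)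

From mathcomp Require Import all_boot all_fingroup.
Set Implicit Arguments. Unset Strict Implicit. Unset Printing Implicit Defensive.

(* Sym_n = {perm 'I_n}; points are 0..n-1 instead of 1..n. *)

Definition wH n (p : {perm 'I_n}) : nat := #|[set i | p i != i]|.

Definition Tc n (p : {perm 'I_n}) : {set 'I_n * 'I_n} :=
  [set ij | (ij.2 == p ij.1) && (p ij.1 != ij.1)].

(* N_3(p) for w_H(p) = 2r-1. *)
Definition N3 n (r : nat) (p : {perm 'I_n}) : {set {perm 'I_n}} :=
  [set s | (#|Tc s :&: Tc p| == r.-1) && (#|Tc s| == r)].

(* The cycle of s with support C (an orbit of s) is also a cycle of p:
   p acts on C exactly as s does. *)
Definition cycle_of n (s p : {perm 'I_n}) (C : {set 'I_n}) : Prop :=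
  forall x, x \in C -> p x = s x.

(* For y = [y_0; ...; y_(k-1)] with m <= k: q acts as the cycle
   (y_0 ... y_(m-1)), i.e. q y_i = y_(i+1) for i < m-1 and q y_(m-1) = y_0.
   (d is an irrelevant default, entries i < m <= size y are used.) *)
Definition is_cycle_seq n (q : {perm 'I_n}) (d : 'I_n) (y : seq 'I_n) (m : nat) : Prop :=
  forall i, i < m -> q (nth d y i) = nth d y (i.+1 %% m).

From mathcomp Require Import all_boot all_fingroup.
From mathcomp Require Import zify.
Set Implicit Arguments. Unset Strict Implicit. Unset Printing Implicit Defensive.

(* Tc s :&: Tc p and Tc s are in bijection with the points moved by s on which
   p does (resp. need not) agree with s, so for w_H(s) = r the condition
   defining N_3(p) says that s and p disagree at exactly one point x0 moved by
   s.  Starting from y1 = s x0, the iterates of p and of s then coincide until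
   they reach x0, which closes the s-cycle of x0 but not the p-cycle of y1:
   the p-cycle through y1 is a strict extension of that s-cycle, and every
   other non-trivial cycle of s is a cycle of p.  Conversely, under the cycle
   description the only disagreement point is the last entry y_t of the
   exceptional cycle. *)

Section Disagreement.
Variable n : nat.
Implicit Types (s p : {perm 'I_n}) (x : 'I_n).

Definition disagree s p := [set x | (s x != x) && (p x != s x)].

Lemma Tc_graph s : Tc s = [set (x, s x) | x in [set x | s x != x]].
Proof.
apply/setP => -[a b]; rewrite inE /=; apply/andP/imsetP.
- by case=> /eqP -> moved; exists a; rewrite ?inE.
- by case=> x; rewrite inE => moved [-> ->].
Qed.

Lemma TcI_graph s p :
  Tc s :&: Tc p = [set (x, s x) | x in [set x | (s x != x) && (p x == s x)]].
Proof.
apply/setP => -[a b]; rewrite !inE /=; apply/idP/imsetP.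
- case/andP=> /andP[/eqP -> moved] /andP[/eqP agree _]; exists a => //.
  by rewrite inE moved -agree eqxx.
- case=> x; rewrite inE => /andP[moved /eqP agree] [-> ->].
  by rewrite agree eqxx moved.
Qed.

Lemma card_Tc s : #|Tc s| = wH s.
Proof. by rewrite Tc_graph card_imset // => x y []. Qed.

Lemma card_TcI s p :
  #|Tc s :&: Tc p| = #|[set x | (s x != x) && (p x == s x)]|.
Proof. by rewrite TcI_graph card_imset // => x y []. Qed.

Lemma wH_agree_disagree s p :
  wH s = #|[set x | (s x != x) && (p x == s x)]| + #|disagree s p|.
Proof.
rewrite /wH -(cardsID [set x | p x == s x] [set x | s x != x]).
by congr (_ + _); apply: eq_card => x; rewrite !inE // andbC.
Qed.

Lemma N3_disagree1 r s p : 0 < r -> wH s = r ->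
  (s \in N3 r p) <-> #|disagree s p| = 1.
Proof.
move=> r_gt0 wHs; rewrite inE card_TcI card_Tc wHs eqxx andbT.
have := wH_agree_disagree s p; rewrite wHs => split_r.
by split => [/eqP | ] ?; [lia | apply/eqP; lia].
Qed.

End Disagreement.

Section PermOrbits.
Variable T : finType.
Implicit Types (s : {perm T}) (x y : T).

Lemma porbit_fix s x : s x = x -> porbit s x = [set x].
Proof.
move=> sx; apply/setP => y; rewrite inE; apply/porbitP/eqP => [[i ->]|->].
  by rewrite permX_fix.
by exists 0; rewrite expg0 perm1.
Qed.

Lemma porbit_succ s x : porbit s (s x) = porbit s x.
Proof. by have := porbit_perm s 1 x; rewrite expg1. Qed.

Lemma card_porbit_gt1 s x : s x != x -> 1 < #|porbit s x|.
Proof.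
move=> sx; have : [set x; s x] \subset porbit s x.
  apply/subsetP => y; rewrite !inE => /orP[]/eqP ->; first exact: porbit_id.
  by rewrite -porbit_succ porbit_id.
by move/subset_leq_card; rewrite cards2 eq_sym sx.
Qed.

Lemma moved_in_porbit s x y :
  y \in porbit s x -> 1 < #|porbit s x| -> s y != y.
Proof.
move=> yx card_gt1; apply: contraTneq card_gt1 => sy.
have -> : porbit s x = porbit s y by apply/eqP; rewrite eq_porbit_mem porbit_sym.
by rewrite porbit_fix // cards1.
Qed.

Lemma iter_porbit_neq s x i : 0 < i < #|porbit s x| -> iter i s x != x.
Proof.
case/andP=> i_gt0 i_lt; have card_gt0 : 0 < #|porbit s x| by lia.
have := nth_uniq x _ _ (uniq_traject_porbit s x); rewrite size_traject.
by move=> /(_ i 0 i_lt card_gt0); rewrite !nth_traject // => ->; rewrite -lt0n.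
Qed.

Lemma iter_porbit_succ s x i : i < #|porbit s x| ->
  s (iter i s x) = iter (i.+1 %% #|porbit s x|) s x.
Proof.
move=> i_lt; rewrite -iterS; case: (ltngtP i.+1 #|porbit s x|) => [?|?|->].
- by rewrite modn_small.
- lia.
- by rewrite modnn iter_porbit.
Qed.

End PermOrbits.

Section UniqueDisagreement.
Variable n : nat.
Variables (s p : {perm 'I_n}) (x0 : 'I_n).
Hypothesis disagree_x0 : disagree s p = [set x0].

Local Notation y1 := (s x0).
Local Notation t := #|porbit s x0|.
Local Notation L := #|porbit p y1|.

Lemma disagree_point : s x0 != x0 /\ p x0 != s x0.
Proof. by have := set11 x0; rewrite -disagree_x0 inE => /andP. Qed.

Lemma agree_off_point x : s x != x -> x != x0 -> p x = s x.
Proof.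
move=> sx x_neq; apply/eqP.
have : x \notin disagree s p by rewrite disagree_x0 inE.
by rewrite inE sx negbK.
Qed.

Lemma card_porbit_point_gt1 : 1 < t.
Proof. by case: disagree_point => /card_porbit_gt1. Qed.

Lemma iter_pred_card_porbit : iter t.-1 s y1 = x0.
Proof.
apply: (@perm_inj _ s); rewrite -iterS prednK ?lt0n ?card_porbit_neq0 //.
by rewrite -porbit_succ iter_porbit.
Qed.

Lemma iter_porbit_neq_point i : i < t.-1 -> iter i s y1 != x0.
Proof.
move=> i_lt; rewrite -(inj_eq (@perm_inj _ s)) -iterS.
by apply: iter_porbit_neq; rewrite porbit_succ; lia.
Qed.

(* Both iterations stay in the s-cycle of x0 and avoid x0 before step t. *)
Lemma iter_agree_porbit i : i < t -> iter i p y1 = iter i s y1.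
Proof.
elim: i => [//|i IH] i_lt; rewrite !iterS IH; last lia.
apply: agree_off_point; last by apply: iter_porbit_neq_point; lia.
apply: (@moved_in_porbit _ _ x0); last exact: card_porbit_point_gt1.
by rewrite -porbit_succ -permX mem_porbit.
Qed.

Lemma card_porbit_lt : t < L.
Proof.
rewrite ltnNge; apply/negP => L_le.
have := iter_porbit p y1; case: (ltngtP L t) L_le => // [L_lt | ->] _.
- rewrite iter_agree_porbit // => /eqP; apply/negP/iter_porbit_neq.
  by rewrite porbit_succ lt0n card_porbit_neq0.
- have t_pos : 0 < t by apply: ltnW card_porbit_point_gt1.
  rewrite -[in iter t](prednK t_pos) iterS iter_agree_porbit ?ltn_predL // iter_pred_card_porbit.
  by case: disagree_point => _ /eqP.
Qed.

Lemma exceptional_not_cycle_of : ~ cycle_of s p (porbit s x0).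
Proof.
case: disagree_point => _ /eqP nagree cyc.
exact/nagree/cyc/porbit_id.
Qed.

Lemma other_cycle_of C : C \in porbits s -> 1 < #|C| -> C != porbit s x0 ->
  cycle_of s p C.
Proof.
case/imsetP=> z _ -> card_gt1 C_neq x xz.
apply: agree_off_point; first exact: moved_in_porbit xz card_gt1.
apply: contraNneq C_neq => x_eq.
by rewrite eq_porbit_mem porbit_sym -x_eq.
Qed.

Lemma take_traject_agree :
  take t (traject p y1 L) = traject s y1 t.
Proof.
have t_le : t <= L by apply: ltnW card_porbit_lt.
apply: (@eq_from_nth _ y1); first by rewrite size_takel ?size_traject.
move=> i; rewrite size_takel ?size_traject // => i_lt.
by rewrite nth_take // !nth_traject ?iter_agree_porbit //; lia.
Qed.

Lemma exceptional_cycle_seq :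
  exists (y : seq 'I_n) (d : 'I_n) (t u : nat),
    [/\ 2 <= t, 1 <= u, size y = t + u & uniq y] /\
    [/\ [set x in take t y] = porbit s x0,
        is_cycle_seq s d y t & is_cycle_seq p d y (t + u)].
Proof.
have t_lt := card_porbit_lt; have t_gt1 := card_porbit_point_gt1.
exists (traject p y1 L), y1, t, (L - t); split.
  by rewrite size_traject uniq_traject_porbit; split=> //; lia.
split.
- by apply/setP => x; rewrite inE take_traject_agree -porbit_succ porbit_traject.
- move=> i i_lt; have : i.+1 %% t < t by rewrite ltn_pmod //; lia.
  rewrite !nth_traject; [|lia|lia] => ?.
  by rewrite !iter_agree_porbit // -porbit_succ iter_porbit_succ // porbit_succ.
- rewrite subnKC; last lia.
  move=> i i_lt; have : i.+1 %% L < L by rewrite ltn_pmod //; lia.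
  by move=> ?; rewrite !nth_traject // iter_porbit_succ.
Qed.

End UniqueDisagreement.

Section ExceptionalCycle.
Variable n : nat.
Variables (s p : {perm 'I_n}) (C : {set 'I_n}) (y : seq 'I_n) (d : 'I_n) (t u : nat).
Hypothesis other_cycles : forall C', C' \in porbits s -> 1 < #|C'| -> C' != C ->
  cycle_of s p C'.
Hypotheses (t_ge2 : 2 <= t) (u_ge1 : 1 <= u) (size_y : size y = t + u) (uniq_y : uniq y).
Hypotheses (C_def : [set x in take t y] = C)
  (s_cycle : is_cycle_seq s d y t) (p_cycle : is_cycle_seq p d y (t + u)).

Lemma disagree_in_exceptional x : x \in disagree s p -> x \in C.
Proof.
rewrite inE => /andP[sx pxs].
have Cx : porbit s x \in porbits s by apply: imset_f.
case: (eqVneq (porbit s x) C) => [<- | neq]; first exact: porbit_id.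
by rewrite (other_cycles Cx (card_porbit_gt1 sx) neq (porbit_id s x)) eqxx in pxs.
Qed.

Lemma disagree_exceptional : disagree s p = [set nth d y t.-1].
Proof.
have size_take : size (take t y) = t by rewrite size_takel // size_y leq_addr.
apply/setP => x; apply/idP/idP.
- move=> x_dis; have := disagree_in_exceptional x_dis; rewrite -C_def inE.
  case/(nthP d)=> i; rewrite size_take => i_lt x_def.
  move: x_dis; rewrite -x_def nth_take // !inE.
  case: (ltnP i t.-1) => i_t.
    rewrite (s_cycle (_ : i < t)) ?(p_cycle (_ : i < t + u)); [|lia..].
    by rewrite !modn_small ?eqxx ?andbF //; lia.
  by rewrite (_ : i = t.-1) ?eqxx ?implybT //; lia.
- rewrite !inE => /eqP ->.
  have last_lt : t.-1 < t by lia.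
  rewrite (s_cycle last_lt) (p_cycle (_ : t.-1 < t + u)); last lia.
  rewrite prednK ?modnn ?modn_small ?nth_uniq ?size_y //; lia.
Qed.

End ExceptionalCycle.

Theorem lemma12 (r n : nat) (p s : {perm 'I_n}) :
  2 <= r -> 2 * r - 1 <= n ->
  wH p = 2 * r - 1 -> wH s = r ->
  (s \in N3 r p) <->
  (exists2 C : {set 'I_n}, C \in porbits s &
     [/\ 1 < #|C|, ~ cycle_of s p C,
         (forall C' : {set 'I_n}, C' \in porbits s -> 1 < #|C'| -> C' != C ->
            cycle_of s p C') &
         exists (y : seq 'I_n) (d : 'I_n) (t u : nat),
           [/\ 2 <= t, 1 <= u, size y = t + u & uniq y] /\
           [/\ [set x in take t y] = C,
               is_cycle_seq s d y t & is_cycle_seq p d y (t + u)]]).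
Proof.
move=> r_ge2 _ _ wHs; rewrite (N3_disagree1 p (_ : 0 < r) wHs); last lia.
split.
- move/eqP/cards1P => [x0 dis_x0].
  exists (porbit s x0); first exact: imset_f.
  split.
  + exact: card_porbit_point_gt1 dis_x0.
  + exact: exceptional_not_cycle_of.
  + exact: other_cycle_of.
  + exact: exceptional_cycle_seq.
- case=> C _ [_ _ others [y [d [t [u [[t_ge2 u_ge1 size_y uniq_y] [C_def s_cyc p_cyc]]]]]]].
  by rewrite (disagree_exceptional others t_ge2 u_ge1 size_y uniq_y C_def s_cyc p_cyc) cards1.
Qed.
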